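(* Let $m\ge1$ and $0\le r<q-1$. Then there exists a codeword $\mathbf{c}\in RM_q(r,m)$ such that $w_1(\mathbf{c})=d_1(RM_q(r,m))$ and $\chi_1(\mathbf{c})$ is a successive subset of $\mathbb{Z}_{q^m}$ with $1\notin\chi_1(\mathbf{c})$ unless $\chi_1(\mathbf{c})=\mathbb{Z}_{q^m}$.
   Context: Fix an enumeration $\mathbb{F}_q=\{\alpha_1=0,\alpha_2,\dots,\alpha_q\}$ and order $\mathbb{F}_q$ by $\alpha_1<\dots<\alpha_q$; order $\mathbb{F}_q^m$ lexicographically as $P_1<\dots<P_{q^m}$. $RM_q(r,m)=\{(f(P_1),\dots,f(P_{q^m})) : f\in\mathbb{F}_q[X_1,\dots,X_m],\ \deg f\le r\}$. $\mathbb{Z}_L=\{1,\dots,L\}$ with indices cyclic mod $L$. $\chi_1(\mathbf{c})$ is the Hamming support of $\mathbf{c}$ and $w_1$ the Hamming weight. For $J\subseteq\mathbb{Z}_L$, a hole of $J$ of size $h\ge1$ is a set $\{a+1,\dots,a+h\}\subseteq\mathbb{Z}_L\setminus J$ (indices mod $L$) with $a,a+h+1\in J$; $J$ is a successive subset if it has at most one hole. *)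

From HB Require Import structures.
From mathcomp Require Import all_boot all_order all_algebra all_field.
From mathcomp Require Import mpoly.
From mathcomp Require Import boolp.
Set Implicit Arguments. Unset Strict Implicit. Unset Printing Implicit Defensive.
Import GRing.Theory.

Section RM.
Variable F : finFieldType.
Local Notation q := #|F|.

Lemma card_ff_gt0 : 0 < q.
Proof. by apply/card_gt0P; exists 0%R. Qed.

Definition digit (i j : nat) : 'I_q :=
  Ordinal (ltn_pmod (i %/ q ^ j) card_ff_gt0).

(* Positions are 0-based:
   position i (i = 0 .. q^m - 1) is the paper's index i+1.
   Coordinate j (0-based, the most significant being j = 0) of P_{i+1}
   is alpha_(digit) where the digits of i in base q are read with the
   first coordinate most significant; since alpha is order-preserving
   from 'I_q (0-based) onto (F, <), this is the lexicographic order. *)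
Definition lexpt (alpha : 'I_q -> F) (m : nat) (i : 'I_(q ^ m)) : 'I_m -> F :=
  fun j => alpha (digit i (m - 1 - j)).

(* Reed-Muller code RM_q(r,m): evaluation vectors of polynomials in m
   variables of total degree <= r.  (msize p = 1 + total degree, 0 for p = 0.) *)
Definition inRM (alpha : 'I_q -> F) (r m : nat) (c : {ffun 'I_(q ^ m) -> F}) : Prop :=
  exists p : {mpoly F[m]}, msize p <= r.+1 /\ forall i, c i = meval (lexpt alpha i) p.

End RM.

Definition supp (F : finFieldType) (N : nat) (c : {ffun 'I_N -> F}) : {set 'I_N} :=
  [set i | c i != 0%R].
Definition wt (F : finFieldType) (N : nat) (c : {ffun 'I_N -> F}) : nat := #|supp c|.

(* d_1(C): minimum Hamming weight of a nonzero codeword of C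
   (= first generalized Hamming weight = minimum distance of a linear code). *)
Definition d1 (F : finFieldType) (N : nat) (C : {ffun 'I_N -> F} -> Prop) : nat :=
  \big[minn/N]_(c : {ffun 'I_N -> F} | `[< C c >] && (c != 0%R)) wt c.

(* Cyclic membership in Z_L (0-based): the nat x denotes the element x mod L. *)
Definition memZ (L : nat) (J : {set 'I_L}) (x : nat) : bool :=
  [exists i in J, val i == x %% L].

Definition is_hole (L : nat) (J : {set 'I_L}) (a h : nat) : Prop :=
  [/\ 1 <= h, memZ J a, memZ J (a + h + 1) &
      forall k, 1 <= k <= h -> ~~ memZ J (a + k)].

Definition hole_set (L : nat) (a h : nat) : {set 'I_L} :=
  [set i : 'I_L | [exists k : 'I_h.+1, (0 < val k) && (val i == (a + k) %% L)]].

Definition successive (L : nat) (J : {set 'I_L}) : Prop :=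
  forall a h a' h', is_hole J a h -> is_hole J a' h' ->
    hole_set L a h = hole_set L a' h'.

Arguments inRM {F} alpha r m c.

From HB Require Import structures.
From mathcomp Require Import all_boot all_order all_algebra all_field.
From mathcomp Require Import mpoly.
From mathcomp Require Import boolp.
From mathcomp Require Import zify.
Set Implicit Arguments. Unset Strict Implicit. Unset Printing Implicit Defensive.
Import GRing.Theory.

(* The codeword is the evaluation of prod_(k < r) (X_1 - alpha_k).  It vanishes
   exactly at the points whose first coordinate is one of alpha_0, ..., alpha_(r-1),
   which in the lexicographic order are the first r q^(m-1) positions; so its
   support is a final segment of Z_(q^m), a set with a single hole that avoids
   position 1 as soon as r > 0, and its weight is (q - r) q^(m-1).  This weight
   is minimal by the Schwartz-Zippel bound: a polynomial of total degree at most
   r that is not identically zero on F_q^m has at most r q^(m-1) zeros there. *)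

Section LastVariable.
Variables (R : comNzRingType) (n : nat).
Local Open Scope ring_scope.
Local Notation widen := (widen_ord (leqnSn n)).

Definition mnm_init (m : 'X_{1..n.+1}) : 'X_{1..n} := [multinom m (widen i) | i < n].

Definition mcoef_last (p : {mpoly R[n.+1]}) (j : nat) : {mpoly R[n]} :=
  \sum_(m <- msupp p | m ord_max == j) p@_m *: 'X_[mnm_init m].

Definition ffun_snoc (w : 'I_n -> R) (x : R) : {ffun 'I_n.+1 -> R} :=
  [ffun i => if unlift ord_max i is Some j then w j else x].

Definition ffun_init (v : {ffun 'I_n.+1 -> R}) : {ffun 'I_n -> R} :=
  [ffun i => v (widen i)].

Lemma ffun_snocW w x (i : 'I_n) : ffun_snoc w x (widen i) = w i.
Proof.
have -> : widen i = lift ord_max i by apply/val_inj; rewrite /= /bump leqNgt ltn_ord.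
by rewrite ffunE liftK.
Qed.

Lemma ffun_snoc_last w x : ffun_snoc w x ord_max = x.
Proof. by rewrite ffunE unlift_none. Qed.

Lemma ffun_init_snoc (w : {ffun 'I_n -> R}) x : ffun_init (ffun_snoc w x) = w.
Proof. by apply/ffunP => i; rewrite ffunE ffun_snocW. Qed.

Lemma ffun_snoc_init v : ffun_snoc (ffun_init v) (v ord_max) = v.
Proof.
apply/ffunP => i; rewrite ffunE; case: unliftP => [j ->|->] //.
by rewrite ffunE; congr (v _); apply/val_inj; rewrite /= /bump leqNgt ltn_ord.
Qed.

Lemma mdeg_init (m : 'X_{1..n.+1}) : mdeg m = (mdeg (mnm_init m) + m ord_max)%N.
Proof.
rewrite !mdegE big_ord_recr /=; congr addn; apply: eq_bigr => i _.
by rewrite mnmE.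
Qed.

Lemma meval_mcoef_last (p : {mpoly R[n.+1]}) (w : 'I_n -> R) j :
  meval w (mcoef_last p j) = \sum_(m <- msupp p | m ord_max == j)
     p@_m * \prod_(i < n) w i ^+ m (widen i).
Proof.
rewrite /mcoef_last raddf_sum; apply: eq_bigr => m _ /=.
rewrite -mul_mpolyC mevalM mevalC mevalX; congr (_ * _).
by apply: eq_bigr => i _; rewrite mnmE.
Qed.

Lemma meval_ffun_snoc (p : {mpoly R[n.+1]}) w x :
  meval (ffun_snoc w x) p = \sum_(j < msize p) meval w (mcoef_last p j) * x ^+ j.
Proof.
under [RHS]eq_bigr do rewrite meval_mcoef_last big_distrl /= big_mkcond /=.
rewrite exchange_big /= mevalE big_seq [RHS]big_seq.
apply: eq_bigr => m mp.
have lt_m : (m ord_max < msize p)%N.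
  by apply: leq_ltn_trans (msize_mdeg_lt mp); rewrite mdeg_init leq_addl.
rewrite [RHS](bigD1 (Ordinal lt_m)) //= eqxx [X in _ = _ + X]big1 ?addr0; last first.
  move=> j nj; rewrite (_ : (m ord_max == j) = false) //.
  by apply/negbTE; apply: contra nj => /eqP e; apply/eqP/val_inj; rewrite /= e.
rewrite big_ord_recr /= ffun_snoc_last -mulrA; congr (_ * (_ * _)).
by apply: eq_bigr => i _; rewrite ffun_snocW.
Qed.

Lemma msize_mcoef_last (p : {mpoly R[n.+1]}) j :
  (msize (mcoef_last p j) <= msize p - j)%N.
Proof.
apply: leq_trans (msize_sum _ _ _) _.
rewrite big_seq_cond; apply: (big_ind (fun x => x <= msize p - j)%N) => //.
  by move=> x y hx hy; rewrite geq_max hx hy.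
move=> m /andP[mp /eqP mj]; apply: leq_trans (msizeZ_le _ _) _.
rewrite msizeX; have := msize_mdeg_lt mp; rewrite mdeg_init mj; lia.
Qed.

Lemma mcoef_last_neq0_lt (p : {mpoly R[n.+1]}) (w : 'I_n -> R) k :
  meval w (mcoef_last p k) != 0 -> (k < msize p)%N.
Proof.
move=> nz_k; rewrite ltnNge; apply: contra nz_k => size_le.
have /eqP -> : mcoef_last p k == 0.
  by rewrite -msize_poly_eq0 -leqn0; apply: leq_trans (msize_mcoef_last p k) _; lia.
by rewrite meval0.
Qed.

End LastVariable.

Lemma card_set_sum (T : finType) (P : pred T) :
  #|[set v | P v]| = \sum_(v : T) (P v : nat).
Proof. by rewrite -sum1_card big_mkcond /=; apply: eq_bigr => v _; rewrite inE. Qed.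

Lemma card_roots_le (F : finFieldType) (g : {poly F}) k :
  (g`_k != 0)%R -> size g <= k.+1 -> #|[set x | root g x]| <= k.
Proof.
move=> gk size_g; have g0 : g != 0%R by apply: contraNneq gk => ->; rewrite coef0.
have := max_poly_roots g0 (rs := enum [set x | root g x]).
rewrite enum_uniq cardE => /(_ _ isT) le_g; rewrite -ltnS; apply: leq_trans size_g.
by apply: le_g; apply/allP => x; rewrite mem_enum inE.
Qed.

Section SchwartzZippel.
Variable F : finFieldType.
Local Notation q := #|F|.
Local Open Scope ring_scope.

Definition card_mzeros n (p : {mpoly F[n]}) :=
  #|[set v : {ffun 'I_n -> F} | meval v p == 0]|.

Lemma card_mzeros_fibers n (p : {mpoly F[n.+1]}) :
  card_mzeros p =
  (\sum_(w : {ffun 'I_n -> F}) #|[set x | meval (ffun_snoc w x) p == 0%R]|)%N.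
Proof.
pose snoc (u : {ffun 'I_n -> F} * F) := ffun_snoc u.1 u.2.
have snoc_bij : bijective snoc.
  exists (fun v => (ffun_init v, v ord_max)) => [[w x]|v].
    by rewrite /snoc /= ffun_snoc_last ffun_init_snoc.
  by rewrite /snoc /= ffun_snoc_init.
rewrite /card_mzeros card_set_sum (reindex snoc) /=; last exact: onW_bij.
rewrite -(pair_big predT predT
  (fun (w : {ffun 'I_n -> F}) (x : F) => (meval (ffun_snoc w x) p == 0 : nat))).
by apply: eq_bigr => w _; rewrite card_set_sum.
Qed.

Lemma card_fiber_zeros_le n (p : {mpoly F[n.+1]}) (w : 'I_n -> F) k :
  meval w (mcoef_last p k) != 0 ->
  (forall j, (k < j)%N -> meval w (mcoef_last p j) = 0) ->
  (#|[set x | meval (ffun_snoc w x) p == 0%R]| <= k)%N.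
Proof.
move=> nz_k top.
pose g := \poly_(j < msize p) meval w (mcoef_last p j).
have -> : [set x | meval (ffun_snoc w x) p == 0] = [set x | root g x].
  by apply/setP => x; rewrite !inE /root horner_poly meval_ffun_snoc.
apply: card_roots_le => //; first by rewrite coef_poly (mcoef_last_neq0_lt nz_k).
by apply/leq_sizeP => j lt_kj; rewrite coef_poly; case: ifP => // _; apply: top.
Qed.

Lemma card_mzeros_snoc_le n (p : {mpoly F[n.+1]}) k :
  (forall j (w : {ffun 'I_n -> F}), (k < j)%N -> meval w (mcoef_last p j) = 0) ->
  (card_mzeros p <= card_mzeros (mcoef_last p k) * q + k * q ^ n)%N.
Proof.
move=> top; rewrite card_mzeros_fibers /card_mzeros card_set_sum big_distrl /=.
have -> : (k * q ^ n = \sum_(w : {ffun 'I_n -> F}) k)%N.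
  by rewrite sum_nat_const card_ffun card_ord mulnC.
rewrite -big_split /=; apply: leq_sum => w _.
have [_|nz_k] := eqVneq (meval w (mcoef_last p k)) 0.
  by rewrite mul1n; apply: leq_trans (max_card _) (leq_addr _ _).
by rewrite mul0n add0n; apply: card_fiber_zeros_le nz_k _ => j; apply: top.
Qed.

Lemma exists_top_mcoef_last n (p : {mpoly F[n.+1]}) :
  (exists v : {ffun 'I_n.+1 -> F}, meval v p != 0) ->
  exists2 k, exists w : {ffun 'I_n -> F}, meval w (mcoef_last p k) != 0 &
    forall j (w : {ffun 'I_n -> F}), (k < j)%N -> meval w (mcoef_last p j) = 0.
Proof.
move=> [v nz_v].
pose K j := [exists w : {ffun 'I_n -> F}, meval w (mcoef_last p j) != 0].
have exK : exists j, K j.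
  have /existsP[j Kj] : [exists j : 'I_(msize p), K j]; last by exists j.
  apply: contraR nz_v => /existsPn noK; rewrite -(ffun_snoc_init v).
  rewrite meval_ffun_snoc; apply/eqP/big1 => j _.
  by have /existsPn/(_ (ffun_init v))/negPn/eqP -> := noK j; rewrite mul0r.
have K_bounded j : K j -> (j <= msize p)%N.
  by case/existsP => w /mcoef_last_neq0_lt/ltnW.
have [k /existsP Kk k_max] := ex_maxnP exK K_bounded.
exists k => // j w lt_kj; apply: contraTeq lt_kj => nz_j.
by rewrite -leqNgt; apply: k_max; apply/existsP; exists w.
Qed.

Theorem card_mzeros_le n d (p : {mpoly F[n]}) :
  (msize p <= d.+1)%N -> (exists v : {ffun 'I_n -> F}, meval v p != 0) ->
  (card_mzeros p * q <= d * q ^ n)%N.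
Proof.
elim: n d p => [|n IH] d p size_p nz_p.
  rewrite /card_mzeros (_ : [set v | _] = set0) ?cards0 //.
  case: nz_p => v0 nz_v0; apply/setP => v; rewrite !inE.
  have -> : v = v0 by apply/ffunP => -[i lt_i0]; exfalso; rewrite ltn0 in lt_i0.
  by rewrite (negbTE nz_v0).
have [k [w nz_k] top] := exists_top_mcoef_last nz_p.
have lt_k := mcoef_last_neq0_lt nz_k.
have IHk : (card_mzeros (mcoef_last p k) * q <= (d - k) * q ^ n)%N.
  apply: IH; last by exists w.
  apply: leq_trans (msize_mcoef_last p k) _; move: (msize p) size_p => s; lia.
have le_kd : (k <= d)%N by rewrite -ltnS (leq_trans lt_k size_p).
have le_N := leq_trans (card_mzeros_snoc_le top) (leq_add IHk (leqnn _)).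
rewrite expnS; apply: leq_trans (leq_mul le_N (leqnn q)) _.
by rewrite -mulnDl subnK // -mulnA (mulnC (q ^ n)%N).
Qed.

End SchwartzZippel.

Lemma modn_mul_split a q Q : 0 < q -> a %% (Q * q) = (a %/ q %% Q) * q + a %% q.
Proof.
move=> q0; have [->|Q0] := posnP Q; first by rewrite mul0n !modn0 -divn_eq.
rewrite {1}(divn_eq a q) {1}(divn_eq (a %/ q) Q) mulnDl -addnA -mulnA modnMDl.
apply: modn_small.
have h1 := ltn_pmod (a %/ q) Q0; have h2 := ltn_pmod a q0.
set y := a %/ q %% Q in h1 *; set z := a %% q in h2 *; nia.
Qed.

Lemma eq_modn_exp_of_digits q m a b : 0 < q ->
  (forall j, j < m -> (a %/ q ^ j) %% q = (b %/ q ^ j) %% q) ->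
  a %% q ^ m = b %% q ^ m.
Proof.
move=> q0; elim: m a b => [|m IH] a b eq_digits; first by rewrite !modn1.
rewrite expnSr !modn_mul_split //; congr (_ * _ + _); last first.
  by have := eq_digits 0 isT; rewrite expn0 !divn1.
by apply: IH => j lt_j; have := eq_digits j.+1 lt_j; rewrite expnS !divnMA.
Qed.

Lemma card_ord_lt N T : #|[set i : 'I_N | i < T]| = minn T N.
Proof.
have [TN|/ltnW NT] := leqP T N; last first.
  rewrite -[RHS]card_ord -cardsT; apply: eq_card => i.
  by rewrite !inE (leq_trans (ltn_ord i) NT).
have -> : [set i : 'I_N | i < T] = [set widen_ord TN j | j in [set: 'I_T]].
  apply/setP => i; rewrite inE; apply/idP/imsetP => [lt|[j _ ->]]; last exact: (ltn_ord j).
  by exists (Ordinal lt) => //; apply/val_inj.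
rewrite card_imset ?cardsT ?card_ord // => x y /(congr1 val) /= e.
exact/val_inj.
Qed.

Lemma card_ord_geq N T : #|[set i : 'I_N | T <= i]| = N - T.
Proof.
have := cardsC [set i : 'I_N | i < T]; rewrite card_ord_lt card_ord.
have -> : [set i : 'I_N | T <= i] = ~: [set i : 'I_N | i < T].
  by apply/setP => i; rewrite !inE -leqNgt.
lia.
Qed.

Section FinalSegment.
Variables (L T : nat) (L_gt0 : 0 < L).
Let J := [set i : 'I_L | T <= i].

Lemma memZ_final_segment x : memZ J x = (T <= x %% L).
Proof.
apply/existsP/idP => [[i /andP[]]|h]; first by rewrite inE => h /eqP <-.
by exists (Ordinal (ltn_pmod x L_gt0)); rewrite inE h eqxx.
Qed.

Lemma hole_set_final_segment a h : is_hole J a h -> hole_set L a h = [set i : 'I_L | i < T].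
Proof.
case=> h_gt0; rewrite !memZ_final_segment => Ja Jb notJ.
have notJ' k : 1 <= k <= h -> (a + k) %% L < T.
  by move=> hk; have := notJ k hk; rewrite memZ_final_segment ltnNge.
have aL : a %% L = L.-1.
  have := notJ' 1 (h_gt0 : 1 <= 1 <= h); have lt_aL := ltn_pmod a L_gt0.
  case: (ltnP (a %% L).+1 L) => [lt|ge]; last by lia.
  by rewrite -modnDml modn_small ?addn1 //; lia.
have wrap j : 1 <= j -> (a + j) %% L = (j - 1) %% L.
  move=> j_gt0; rewrite -modnDml aL.
  have -> : (L.-1 + j = L + (j - 1))%N by lia.
  by rewrite modnDl.
have TL : T < L by move: Ja; rewrite aL; lia.
have -> : h = T.
  apply/eqP; rewrite eqn_leq; apply/andP; split.
    rewrite leqNgt; apply/negP => Th.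
    have := notJ' T.+1; rewrite wrap // subn1 /= modn_small // ltnn.
    by move=> /(_ Th).
  move: Jb; rewrite -addnA wrap ?addn1 // subn1 /=.
  by move=> /leq_trans; apply; apply: leq_mod.
apply/setP => i; rewrite !inE; apply/existsP/idP.
  by move=> [[k lt_k] /= /andP[k_gt0 /eqP ->]]; rewrite wrap // modn_small; lia.
move=> iT; exists (Ordinal (iT : i.+1 < T.+1)) => /=.
by rewrite wrap // subn1 /= modn_small ?eqxx //; apply: ltn_ord.
Qed.

Lemma successive_final_segment : successive J.
Proof. by move=> a h a' h' /hole_set_final_segment -> /hole_set_final_segment ->. Qed.

End FinalSegment.

Lemma bigminn_le (T : eqType) (s : seq T) (P : pred T) (f : T -> nat) N j :
  j \in s -> P j -> \big[minn/N]_(i <- s | P i) f i <= f j.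
Proof.
elim: s => // x s IH; rewrite inE big_cons => /orP [/eqP <-|js] Pj.
  by rewrite Pj geq_minl.
case: (P x); last exact: IH.
exact: leq_trans (geq_minr _ _) (IH js Pj).
Qed.

Lemma d1_eq_wt (F : finFieldType) N (C : {ffun 'I_N -> F} -> Prop) c0 :
  C c0 -> c0 != 0%R -> (forall c, C c -> c != 0%R -> wt c0 <= wt c) ->
  d1 C = wt c0.
Proof.
move=> C_c0 nz_c0 c0_min; apply/eqP; rewrite eqn_leq; apply/andP; split.
  by apply: bigminn_le; rewrite ?mem_index_enum // nz_c0 andbT; apply/asboolP.
apply: (big_ind (fun x => wt c0 <= x)).
- by rewrite /wt (leq_trans (max_card _)) // card_ord.
- by move=> x y hx hy; rewrite leq_min hx hy.
- by move=> c /andP[/asboolP C_c nz_c]; apply: c0_min.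
Qed.

Section MinimumWeightWord.
Variables (F : finFieldType) (alpha : 'I_#|F| -> F) (alpha_bij : bijective alpha)
  (m r : nat) (m_gt0 : 1 <= m).
Local Notation q := #|F|.
Local Notation L := (q ^ m).
Local Notation Q := (q ^ (m - 1)).

Let q_gt0 : 0 < q := card_ff_gt0 F.
Let LQ : L = Q * q.
Proof. by rewrite -expnSr; congr (_ ^ _); lia. Qed.
Let Q_gt0 : 0 < Q. Proof. by rewrite expn_gt0 q_gt0. Qed.

Definition lex_point (i : 'I_L) : {ffun 'I_m -> F} := [ffun j => lexpt alpha i j].

Lemma lex_point_inj : injective lex_point.
Proof.
move=> i i' /ffunP eq_pt; apply/val_inj => /=.
have := @eq_modn_exp_of_digits q m i i' q_gt0; rewrite !modn_small //; apply => j lt_jm.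
have lt_j'm : m - 1 - j < m by lia.
have := eq_pt (Ordinal lt_j'm); rewrite !ffunE /lexpt /=.
have -> : m - 1 - (m - 1 - j) = j by lia.
by move=> /(bij_inj alpha_bij) /(congr1 val).
Qed.

Lemma RM_wt_ge c : inRM alpha r m c -> c != 0%R -> (q - r) * Q <= wt c.
Proof.
move=> [p [size_p eval_p]] nz_c.
have [i ci] : exists i, c i != 0%R.
  by apply/existsP; apply: contraR nz_c => /existsPn c0; apply/eqP/ffunP => i;
    rewrite ffunE; apply/eqP/negPn.
have eval_pt i' : meval (lex_point i') p = c i'.
  by rewrite eval_p; apply: meval_eq => j; rewrite ffunE.
have zeros_le : #|~: supp c| <= card_mzeros p.
  rewrite /card_mzeros -(card_imset _ lex_point_inj); apply: subset_leq_card.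
  by apply/subsetP => v /imsetP[i' /[!inE] /negPn ci' ->]; rewrite eval_pt.
have SZ : card_mzeros p * q <= r * L.
  by apply: card_mzeros_le size_p _; exists (lex_point i); rewrite eval_pt.
have le_N : card_mzeros p <= r * Q by rewrite -(leq_pmul2r q_gt0) -mulnA -LQ.
have := cardsC (supp c); rewrite card_ord /wt mulnBl.
by move: #|supp c| #|~: supp c| zeros_le => W Z; rewrite LQ; lia.
Qed.

Let x0 : 'I_m := Ordinal m_gt0.
Let A := [set k : 'I_q | k < r].

Definition minwt_poly : {mpoly F[m]} := (\prod_(k in A) ('X_x0 - (alpha k)%:MP))%R.
Definition minwt_word : {ffun 'I_L -> F} := [ffun i => meval (lexpt alpha i) minwt_poly].

Lemma msize_minwt_poly : msize minwt_poly <= r.+1.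
Proof.
have XsubC_neq0 (k : 'I_q) : ('X_x0 - (alpha k)%:MP != 0 :> {mpoly F[m]})%R.
  apply/negP => /eqP/(congr1 (meval (fun _ => alpha k + 1)%R)).
  rewrite meval0 rmorphB /= mevalXU mevalC addrAC subrr add0r.
  by move/eqP; rewrite oner_eq0.
have size_XsubC (k : 'I_q) : msize ('X_x0 - (alpha k)%:MP : {mpoly F[m]})%R <= 2.
  apply: leq_trans (msizeD_le _ _) _; rewrite msizeN geq_max msizeX mdeg1 /=.
  by rewrite msizeC; case: (_ != _).
have : (minwt_poly != 0%R) && (msize minwt_poly <= (\sum_(k in A) 1).+1).
  apply: (big_rec2 (fun N p => (p != 0%R) && (msize p <= N.+1))).
    by rewrite oner_neq0 msize1.
  move=> k N p _ /andP[nz_p size_p]; rewrite mulf_neq0 //= msizeM //.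
  by move: (size_XsubC k) size_p; move: (msize _) (msize p) => a b; lia.
by rewrite sum1_card card_ord_lt => /andP[_ /leq_trans]; apply; rewrite ltnS geq_minl.
Qed.

Lemma minwt_word_in_RM : inRM alpha r m minwt_word.
Proof. by exists minwt_poly; split; [exact: msize_minwt_poly | move=> i; rewrite ffunE]. Qed.

(* The first coordinate of the point at position i is its leading base-q digit,
   which is i %/ q^(m-1). *)
Lemma supp_minwt_word : supp minwt_word = [set i : 'I_L | r * Q <= i].
Proof.
apply/setP => i; rewrite !inE ffunE /minwt_poly (big_morph _ (mevalM _) (meval1 _)).
set dg := digit F i (m - 1).
have dgE : val dg = i %/ Q.
  by rewrite /= modn_small // ltn_divLR // mulnC -LQ; apply: ltn_ord.
have eval_factor (k : 'I_q) :
    meval (lexpt alpha i) ('X_x0 - (alpha k)%:MP) = (alpha dg - alpha k)%R.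
  by rewrite mevalB mevalXU mevalC /lexpt subn0.
apply/prodf_neq0/idP => [nz_factor|le_rQ k].
  rewrite -leq_divRL // -dgE leqNgt; apply/negP => lt_dg.
  by have := nz_factor dg; rewrite inE lt_dg eval_factor subrr eqxx => /(_ isT).
rewrite inE eval_factor subr_eq0 => lt_kr.
apply/negP => /eqP /(bij_inj alpha_bij) eq_k.
by move: lt_kr; rewrite -eq_k dgE ltnNge leq_divRL // le_rQ.
Qed.

Lemma wt_minwt_word : wt minwt_word = (q - r) * Q.
Proof. by rewrite /wt supp_minwt_word card_ord_geq LQ mulnBl mulnC. Qed.

Lemma minwt_word_neq0 : r < q -> minwt_word != 0%R.
Proof.
move=> lt_rq; apply/eqP => minwt0.
have : (q - r) * Q = 0.
  rewrite -wt_minwt_word minwt0 /wt; apply/eqP; rewrite cards_eq0.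
  by apply/eqP/setP => i; rewrite !inE ffunE eqxx.
by move/eqP; rewrite muln_eq0 subn_eq0 leqNgt lt_rq eqn0Ngt Q_gt0.
Qed.

End MinimumWeightWord.

Unset Implicit Arguments.
Set Strict Implicit.

Theorem mainTheorem8 (F : finFieldType) (alpha : 'I_#|F| -> F)
    (alpha_bij : bijective alpha)
    (alpha0 : forall i : 'I_#|F|, val i = 0 -> alpha i = 0%R)
    (m r : nat) (hm : 1 <= m) (hr : r < #|F| - 1) :
  exists c : {ffun 'I_(#|F| ^ m) -> F},
    [/\ inRM alpha r m c,
        wt c = d1 (inRM alpha r m),
        successive (supp c) &
        (supp c = [set: 'I_(#|F| ^ m)] \/
         forall i : 'I_(#|F| ^ m), val i = 0 -> i \notin supp c)].
Proof.
have lt_rq : r < #|F| := leq_trans hr (leq_subr 1 _).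
set c := minwt_word alpha r hm.
have RM_c : inRM alpha r m c := minwt_word_in_RM alpha r hm.
have supp_c : supp c = [set i : 'I_(#|F| ^ m) | r * #|F| ^ (m - 1) <= i] := supp_minwt_word alpha_bij r hm.
exists c; split=> //.
- rewrite (d1_eq_wt RM_c (minwt_word_neq0 alpha_bij hm lt_rq)) // => c' RM_c' nz_c'.
  by rewrite (wt_minwt_word alpha_bij); apply: (RM_wt_ge alpha_bij).
- by rewrite supp_c; apply: successive_final_segment; rewrite expn_gt0 card_ff_gt0.
- rewrite supp_c; have [->|r_gt0] := posnP r.
    by left; apply/setP => i; rewrite !inE mul0n.
  by right => i i0; rewrite inE i0 -ltnNge muln_gt0 r_gt0 expn_gt0 card_ff_gt0.
Qed.
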